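(* Let $\mathcal{A}$ be a finite abelian group, $N\ge1$, and let $\alpha$ be a stationary $N$-step Markov measure on $\mathcal{A}^{\mathbb{Z}}$ with transition probabilities $q^{\mathbf{a}}_b=\Pr[c_N=b\mid (c_0,\dots,c_{N-1})=\mathbf{a}]$, $\mathbf{a}\in\mathcal{A}^{N}$, $b\in\mathcal{A}$. If all $q^{\mathbf{a}}_b$ are nonzero, then $\alpha$ is harmonically mixing.
   Context: An $N$-step Markov measure is a shift-invariant measure under which the distribution of each coordinate, conditioned on all previous coordinates, depends only on the previous $N$ coordinates via $q^{\mathbf{a}}_b$ (with $\sum_b q^{\mathbf{a}}_b=1$). Characters of $\mathcal{A}^{\mathbb{Z}}$ are $\chi=\bigotimes_{n}\chi_n$, $\chi_n$ characters of $\mathcal{A}$, all but finitely many trivial; rank$(\chi)$ is the number of nontrivial $\chi_n$. A measure is harmonically mixing if for every $\varepsilon>0$ there is $R$ with rank$(\chi)>R\Rightarrow|\int\chi\,d\mu|<\varepsilon$. *)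

From HB Require Import structures.
From mathcomp Require Import all_boot all_order all_algebra.
From mathcomp Require Import all_classical all_reals all_analysis.
From mathcomp Require Import complex.

Set Implicit Arguments.
Unset Strict Implicit.
Unset Printing Implicit Defensive.

Import Order.TTheory GRing.Theory Num.Theory.
Local Open Scope classical_set_scope.
Local Open Scope ring_scope.
Local Open Scope complex_scope.

Definition config (A : finZmodType) := int -> A.

Section config_instances.
Variable A : finZmodType.
HB.instance Definition _ := Choice.on (config A).
HB.instance Definition _ := isPointed.Build (config A) (fun _ => 0%R).
End config_instances.

Section Defs.
Variable A : finZmodType.

Definition cyl (m : int) (w : seq A) : set (config A) :=
  [set x | forall i : nat, (i < size w)%N -> x (m + i%:Z) = nth 0 w i].

Definition cylinders : set (set (config A)) :=
  [set C | exists m w, C = cyl m w].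

Definition shiftspace := g_sigma_algebraType cylinders.

Definition shift (x : config A) : config A := fun n => x (n + 1).

Variable R : realType.

Definition stationary (mu : probability shiftspace R) :=
  forall E : set shiftspace, measurable E -> mu (shift @^-1` E) = mu E.

(* N-step Markov property with transition probabilities q^a_b: the
   probability of c_(m+k) = b conditioned on any finite past
   c_m ... c_(m+k-1) = u ++ a (with |a| = N) is q^a_b. *)
Definition is_markov (N : nat) (mu : probability shiftspace R)
  (q : N.-tuple A -> A -> R) :=
  forall (m : int) (u : seq A) (a : N.-tuple A) (b : A),
    mu (cyl m (u ++ a ++ [:: b])) = (mu (cyl m (u ++ a)) * (q a b)%:E)%E.

Definition is_character (chi : A -> R[i]) :=
  (forall a b, chi (a + b) = chi a * chi b) /\ (forall a, `|chi a| = 1).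

Definition trivial_char (chi : A -> R[i]) : bool := [forall a, chi a == 1].

(* a character of A^Z : chi = (x) chi_n, with chi_n trivial outside the
   finite list s *)
Definition is_Zcharacter (s : seq int) (chi : int -> A -> R[i]) :=
  (forall n, is_character (chi n)) /\ (forall n, n \notin s -> trivial_char (chi n)).

Definition Zchar_eval (s : seq int) (chi : int -> A -> R[i]) (x : config A) : R[i] :=
  \prod_(n <- undup s) chi n (x n).

Definition Zchar_rank (s : seq int) (chi : int -> A -> R[i]) : nat :=
  size [seq n <- undup s | ~~ trivial_char (chi n)].

Definition cintegral (mu : probability shiftspace R) (f : shiftspace -> R[i]) : R[i] :=
  Complex (fine (\int[mu]_x (complex.Re (f x))%:E))
          (fine (\int[mu]_x (complex.Im (f x))%:E)).

Definition harmonically_mixing (mu : probability shiftspace R) :=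
  forall eps : R, 0 < eps -> exists R0 : nat,
    forall (s : seq int) (chi : int -> A -> R[i]),
      is_Zcharacter s chi -> (R0 < Zchar_rank s chi)%N ->
      `|cintegral mu (Zchar_eval s chi)| < eps%:C.

End Defs.

From HB Require Import structures.
From mathcomp Require Import all_boot all_order all_algebra.
From mathcomp Require Import all_classical all_reals all_analysis.
From mathcomp Require Import complex.
From mathcomp Require Import ring zify.
Import Order.TTheory GRing.Theory Num.Theory.
Local Open Scope ring_scope.
Local Open Scope complex_scope.
Set Implicit Arguments.
Unset Strict Implicit.
Unset Printing Implicit Defensive.

(* Let d > 0 be the least transition probability (positive, since a word of
   positive probability extends with probability q^a_b) and
   rho := 1 - (#|A| d)^(N+1) < 1.  A character of A^Z supported in a window
   integrates to a finite sum of mu[w] times the product of its factors along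
   w.  Conditionally on the past, the contribution of the coordinates from a
   nontrivial one, chi_j, onward is an average of chi_j(b) against the weights
   of the paths that continue with b and N more letters, after which the
   chain has forgotten b.  These weights are >= d^(N+1) and chi_j sums to 0
   over A, so the average loses a factor rho.  Among rank > (N+1) n nontrivial
   coordinates one finds n such losses, whence |integral| <= rho^n. *)

Section Words.
Variable A : finType.

Fixpoint allwords (k : nat) : seq (seq A) :=
  if k is k'.+1 then flatten [seq [seq b :: w | w <- allwords k'] | b <- index_enum A]
  else [:: [::]].

Lemma big_allwords0 (V : nmodType) (F : seq A -> V) :
  \sum_(w <- allwords 0) F w = F [::].
Proof. by rewrite /= big_seq1. Qed.

Lemma big_allwordsS (V : nmodType) k (F : seq A -> V) :
  \sum_(w <- allwords k.+1) F w = \sum_(b : A) \sum_(w <- allwords k) F (b :: w).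
Proof. by rewrite /= big_flatten big_map /=; apply: eq_bigr => b _; rewrite big_map. Qed.

Lemma size_allwords k w : w \in allwords k -> size w = k.
Proof.
elim: k w => [|k IH] w /=; first by rewrite inE => /eqP->.
by move=> /flattenP [l /mapP [b _ ->]] /mapP [w' /IH <- ->].
Qed.

Lemma eq_big_allwords (V : nmodType) k (F1 F2 : seq A -> V) :
  (forall w, size w = k -> F1 w = F2 w) ->
  \sum_(w <- allwords k) F1 w = \sum_(w <- allwords k) F2 w.
Proof.
move=> eqF; rewrite big_seq_cond [RHS]big_seq_cond.
by apply: eq_bigr => w /andP[/size_allwords + _]; apply: eqF.
Qed.

Lemma big_allwords_cat (V : nmodType) k1 k2 (F : seq A -> V) :
  \sum_(w <- allwords (k1 + k2)) F w =
  \sum_(u <- allwords k1) \sum_(v <- allwords k2) F (u ++ v).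
Proof.
elim: k1 F => [|k IH] F; first by rewrite add0n big_allwords0.
by rewrite addSn !big_allwordsS; apply: eq_bigr => b _; rewrite IH.
Qed.

Lemma sum_allwords_const (V : nmodType) k (x : V) :
  \sum_(w <- allwords k) x = x *+ (#|A| ^ k).
Proof.
elim: k => [|k IH]; first by rewrite big_allwords0.
rewrite big_allwordsS; under eq_bigr do rewrite IH.
by rewrite sumr_const -mulrnA expnS mulnC.
Qed.

End Words.

Lemma sum_char_eq0 (A : finZmodType) (K : idomainType) (chi : A -> K) :
  {morph chi : a b / a + b >-> a * b} -> ~~ [forall a, chi a == 1] ->
  \sum_(b : A) chi b = 0.
Proof.
move=> chiD /forallPn [a0 chi_a0].
have shift : \sum_(b : A) chi b = chi a0 * \sum_(b : A) chi b.
  rewrite mulr_sumr (reindex_inj (addrI a0)) /=.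
  by apply: eq_bigr => b _; rewrite chiD.
have : (\sum_(b : A) chi b) * (1 - chi a0) = 0.
  by rewrite mulrBr mulr1 mulrC -shift subrr.
by move/eqP; rewrite mulf_eq0 subr_eq0 (eq_sym 1) (negbTE chi_a0) orbF => /eqP.
Qed.

(* Subtracting the constant [e] from [f] does not change the sum, since [g] has mean zero. *)
Lemma norm_sum_mean0_le (T : finType) (R : rcfType) (g : T -> R[i]) (f : T -> R) e :
  \sum_(t : T) g t = 0 -> (forall t, `|g t| <= 1) -> (forall t, e <= f t) ->
  `|\sum_(t : T) g t * (f t)%:C| <= (\sum_(t : T) f t - #|T|%:R * e)%:C.
Proof.
move=> g_mean0 g_le1 e_le_f.
have -> : \sum_(t : T) g t * (f t)%:C = \sum_(t : T) g t * (f t - e)%:C.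
  transitivity (\sum_(t : T) g t * (f t - e)%:C + e%:C * \sum_(t : T) g t).
    rewrite mulr_sumr -big_split /=.
    by apply: eq_bigr => t _; rewrite rmorphB /=; ring.
  by rewrite g_mean0 mulr0 addr0.
have -> : (\sum_(t : T) f t - #|T|%:R * e)%:C = \sum_(t : T) (f t - e)%:C.
  by rewrite -raddf_sum /= sumrB sumr_const mulr_natl.
apply: le_trans (ler_norm_sum _ _ _) (ler_sum _ _) => t _.
have fe_ge0 : 0 <= (f t - e)%:C by rewrite ler0c subr_ge0.
by rewrite normrM (ger0_norm fe_ge0) ler_piMl.
Qed.

Lemma fin_pos_lower_bound (R : realDomainType) (T : finType) (f : T -> R) :
  (forall x, 0 < f x) -> exists2 d, 0 < d & forall x, d <= f x.
Proof.
move=> f_gt0.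
suff [d d_gt0 le_d] : exists2 d, 0 < d & forall x, x \in enum T -> d <= f x.
  by exists d => // x; apply: le_d; rewrite mem_enum.
elim: (enum T) => [|x s [d d_gt0 le_d]]; first by exists 1.
exists (Num.min (f x) d); first by rewrite lt_min f_gt0 d_gt0.
move=> y; rewrite inE => /orP[/eqP->|ys]; first by rewrite ge_min lexx.
by rewrite ge_min le_d ?orbT.
Qed.

Lemma exists_expr_lt (R : realType) (r e : R) : 0 <= r < 1 -> 0 < e ->
  exists n, r ^+ n < e.
Proof.
move=> /andP[r_ge0 r_lt1] e_gt0.
have r_norm : `|r| < 1 by rewrite ger0_norm.
have [n _ small] := cvgr0_norm_lt _ (cvg_expr r_norm) _ e_gt0.
by exists n; have := small n (leqnn n); rewrite ger0_norm // exprn_ge0.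
Qed.

Section LastLetters.
Variables (T : Type) (N : nat).

Definition lastN (w : seq T) : seq T := drop (size w - N) w.

Lemma size_lastN w : (N <= size w)%N -> size (lastN w) = N.
Proof. by move=> Nw; rewrite size_drop subKn. Qed.

Lemma lastN_cat u c : size c = N -> lastN (u ++ c) = c.
Proof. by rewrite /lastN size_cat => ->; rewrite addnK drop_size_cat. Qed.

Lemma lastN_rcons_eq w1 w2 b : size w1 = size w2 -> lastN w1 = lastN w2 ->
  lastN (rcons w1 b) = lastN (rcons w2 b).
Proof.
have lastN_rcons w : lastN (rcons w b) =
    drop ((size w).+1 - N - (size w - N)) (rcons (lastN w) b).
  rewrite /lastN size_rcons.
  have -> : rcons w b = take (size w - N) w ++ rcons (drop (size w - N) w) b.
    by rewrite -rcons_cat cat_take_drop.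
  rewrite drop_cat size_takel ?leq_subr //.
  by have -> : ((size w).+1 - N < size w - N)%N = false by lia.
by move=> eq_size eq_lastN; rewrite !lastN_rcons eq_size eq_lastN.
Qed.

End LastLetters.

Section MarkovWords.
Variables (A : finZmodType) (R : realDomainType) (N : nat) (q : N.-tuple A -> A -> R).

(* [q] read on a sequence; junk unless [size s = N]. *)
Definition qseq (s : seq A) (b : A) : R := q (insubd (nseq_tuple N 0) s) b.

Variable P : seq A -> R.
Hypothesis P_ge0 : forall u, 0 <= P u.
Hypothesis P_nil : P [::] = 1.
Hypothesis P_rcons_sum : forall u, P u = \sum_(b : A) P (rcons u b).
Hypothesis P_markov : forall (u : seq A) (a : N.-tuple A) (b : A),
  P (u ++ a ++ [:: b]) = P (u ++ a) * q a b.

Lemma P_rcons u b : (N <= size u)%N -> P (rcons u b) = P u * qseq (lastN N u) b.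
Proof.
move=> Nu; have /eqP size_last := size_lastN Nu.
have := P_markov (take (size u - N) u) (insubd (nseq_tuple N 0) (lastN N u)) b.
by rewrite insubdK // /lastN catA cat_take_drop cats1.
Qed.

Lemma sum_P_cat k u : \sum_(c <- allwords A k) P (u ++ c) = P u.
Proof.
elim: k u => [|k IH] u; first by rewrite big_allwords0 cats0.
rewrite big_allwordsS (P_rcons_sum u); apply: eq_bigr => b _.
by under eq_bigr do rewrite -cat_rcons; rewrite IH.
Qed.

(* Some word [a0] of length [N] has positive probability, and then so do all
   its extensions; this forces every [q t b] to be nonnegative. *)
Lemma transition_gt0 : (forall t b, q t b != 0) -> forall t b, 0 < q t b.
Proof.
move=> q_neq0 t b.
have [a0 a0_word Pa0_gt0] : exists2 a, a \in allwords A N & 0 < P a.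
  apply/hasP; apply: contraT => /hasPn Pa_le0.
  have := sum_P_cat N [::]; rewrite P_nil big1_seq => [/eqP|a /andP[_ a_word]].
    by rewrite eq_sym oner_eq0.
  by apply/eqP; rewrite eq_le P_ge0 andbT leNgt Pa_le0.
have size_a0 : size a0 = N by apply: size_allwords a0_word.
have P_ext_gt0 v : 0 < P (a0 ++ v).
  elim/last_ind: v => [|v c IH]; first by rewrite cats0.
  rewrite -rcons_cat P_rcons ?size_cat ?size_a0 ?leq_addr //.
  rewrite mulr_gt0 // lt_def q_neq0 /= -(pmulr_rge0 _ IH) -P_rcons ?P_ge0 //.
  by rewrite size_cat size_a0 leq_addr.
have := P_ge0 (rcons (a0 ++ t) b).
rewrite P_rcons ?size_cat ?size_a0 ?leq_addr // lastN_cat ?size_tuple //.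
by rewrite /qseq valKd (pmulr_rge0 _ (P_ext_gt0 _)) lt_def q_neq0.
Qed.

End MarkovWords.

Section CondProd.
Variables (A : finZmodType) (R : rcfType) (N : nat) (q : N.-tuple A -> A -> R).
Variable G : nat -> A -> R[i].

Local Notation qseq := (qseq q).
Local Notation lastN := (lastN N).

(* [cond_prod r w] is the conditional expectation of the product of the
   [G j x_j], [size w <= j < size w + r], given the past [x = w ...]. *)
Fixpoint cond_prod (r : nat) (w : seq A) : R[i] :=
  if r is r'.+1 then
    \sum_(b : A) G (size w) b * (qseq (lastN w) b)%:C * cond_prod r' (rcons w b)
  else 1.

Fixpoint prod_char (j : nat) (c : seq A) : R[i] :=
  if c is b :: c' then G j b * prod_char j.+1 c' else 1.

Fixpoint path_prob (u c : seq A) : R :=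
  if c is b :: c' then qseq (lastN u) b * path_prob (rcons u b) c' else 1.

Lemma prod_char_cat j a c : prod_char j (a ++ c) = prod_char j a * prod_char (j + size a) c.
Proof.
elim: a j => [|b a IH] j /=; first by rewrite addn0 mul1r.
by rewrite IH addnS -addSn mulrA.
Qed.

Lemma cond_prod_lastN r w1 w2 : size w1 = size w2 -> lastN w1 = lastN w2 ->
  cond_prod r w1 = cond_prod r w2.
Proof.
elim: r w1 w2 => //= r IH w1 w2 eq_size eq_last; apply: eq_bigr => b _.
rewrite eq_size eq_last (IH _ (rcons w2 b)) ?size_rcons ?eq_size //.
exact: lastN_rcons_eq.
Qed.

Lemma cond_prod_unroll k r u : cond_prod (k + r) u =
  \sum_(c <- allwords A k) prod_char (size u) c * (path_prob u c)%:C * cond_prod r (u ++ c).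
Proof.
elim: k u => [|k IH] u; first by rewrite big_allwords0 /= rmorph1 !mul1r cats0.
rewrite addSn /= big_allwordsS; apply: eq_bigr => b _.
rewrite IH big_distrr; apply: eq_bigr => c _ /=.
by rewrite size_rcons cat_rcons rmorphM /=; ring.
Qed.

(* After one step [b] and [N] more steps [c] the chain has forgotten [b]:
   [nseq _ 0 ++ c] stands for any past of the right length ending in [c]. *)
Lemma cond_prod_forget r w : cond_prod (N.+1 + r) w =
  \sum_(c <- allwords A N)
     prod_char (size w).+1 c * cond_prod r (nseq (size w).+1 0 ++ c) *
     \sum_(b : A) G (size w) b * (qseq (lastN w) b * path_prob (rcons w b) c)%:C.
Proof.
rewrite addSn /=.
under eq_bigr => b _ do rewrite cond_prod_unroll big_distrr /=.
rewrite exchange_big /=; apply: eq_big_allwords => c size_c.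
rewrite big_distrr /=; apply: eq_bigr => b _.
rewrite (@cond_prod_lastN r (rcons w b ++ c) (nseq (size w).+1 0 ++ c)); last first.
- by rewrite !lastN_cat.
- by rewrite !size_cat size_rcons size_nseq.
by rewrite size_rcons rmorphM /=; ring.
Qed.

Variable d : R.
Hypothesis d_gt0 : 0 < d.
Hypothesis d_le_q : forall t b, d <= q t b.
Hypothesis sum_q : forall t, \sum_(b : A) q t b = 1.
Hypothesis norm_G_le1 : forall j b, `|G j b| <= 1.
Variable nontriv : nat -> bool.
Hypothesis sum_G_nontriv : forall j, nontriv j -> \sum_(b : A) G j b = 0.

Let d_le_qseq s b : d <= qseq s b. Proof. exact: d_le_q. Qed.
Let qseq_ge0 s b : 0 <= qseq s b. Proof. exact: le_trans (ltW d_gt0) (d_le_qseq _ _). Qed.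
Let sum_qseq s : \sum_(b : A) qseq s b = 1. Proof. exact: sum_q. Qed.

Definition rho : R := 1 - (#|A|%:R * d) ^+ N.+1.

Lemma rho_ge0_lt1 : 0 <= rho < 1.
Proof.
have card_d_gt0 : 0 < #|A|%:R * d by rewrite mulr_gt0 // ltr0n; apply/card_gt0P; exists 0.
have card_d_le1 : #|A|%:R * d <= 1.
  have : \sum_(b : A) d <= \sum_(b : A) q (nseq_tuple N 0) b by apply: ler_sum.
  by rewrite sum_q sumr_const mulr_natl.
by rewrite /rho subr_ge0 exprn_ile1 ?(ltW card_d_gt0) //= ltrBlDr ltrDl exprn_gt0.
Qed.

Lemma norm_prod_char_le1 j c : `|prod_char j c| <= 1.
Proof.
elim: c j => /= [|b c IH] j; first by rewrite normr1.
by rewrite normrM; apply: mulr_ile1.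
Qed.

Lemma path_prob_ge u c : d ^+ size c <= path_prob u c.
Proof.
elim: c u => /= [|b c IH] u; first by rewrite expr0.
by rewrite exprS ler_pM ?exprn_ge0 ?(ltW d_gt0) ?d_le_qseq.
Qed.

Lemma sum_path_prob k u : \sum_(c <- allwords A k) path_prob u c = 1.
Proof.
elim: k u => [|k IH] u; first by rewrite big_allwords0.
rewrite big_allwordsS /=.
by under eq_bigr do rewrite -big_distrr /= IH mulr1.
Qed.

Lemma cond_prod_step_le r w (M : R[i]) :
  (forall b, `|cond_prod r (rcons w b)| <= M) -> `|cond_prod r.+1 w| <= M.
Proof.
move=> le_M /=; apply: le_trans (ler_norm_sum _ _ _) _.
apply: (@le_trans _ _ (\sum_(b : A) (qseq (lastN w) b)%:C * M)).
  apply: ler_sum => b _; rewrite !normrM (ger0_norm (x := (qseq _ b)%:C)) ?ler0c //.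
  rewrite -[X in X * M]mul1r; apply: ler_pM; rewrite ?normr_ge0 //.
  - by rewrite mulr_ge0 ?normr_ge0 ?ler0c.
  - by apply: ler_wpM2r; rewrite ?ler0c.
by rewrite -mulr_suml -raddf_sum /= sum_qseq mul1r.
Qed.

(* Expand with [cond_prod_forget]; the inner sum over [b] is bounded by
   [norm_sum_mean0_le], every path of [N.+1] letters having weight at least
   [d ^+ N.+1], and summing the bound over the [#|A| ^ N] words [c] gives [rho]. *)
Lemma cond_prod_contract r w (M : R[i]) : nontriv (size w) ->
  (forall u, size u = (size w + N).+1 -> `|cond_prod r u| <= M) ->
  `|cond_prod (N.+1 + r) w| <= rho%:C * M.
Proof.
move=> nt_w le_M.
have M_ge0 : 0 <= M.
  apply: le_trans (normr_ge0 _) (le_M (nseq (size w + N).+1 0) _).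
  by rewrite size_nseq.
rewrite cond_prod_forget; apply: le_trans (ler_norm_sum _ _ _) _.
apply: (@le_trans _ _ (\sum_(c <- allwords A N) M *
   (\sum_(b : A) qseq (lastN w) b * path_prob (rcons w b) c - #|A|%:R * d ^+ N.+1)%:C)).
  rewrite big_seq_cond [X in _ <= X]big_seq_cond.
  apply: ler_sum => c /andP[/size_allwords size_c _].
  rewrite !normrM; apply: ler_pM; rewrite ?mulr_ge0 ?normr_ge0 //.
    rewrite -[X in _ <= X]mul1r; apply: ler_pM; rewrite ?normr_ge0 //.
      exact: norm_prod_char_le1.
    by apply: le_M; rewrite size_cat size_nseq size_c addSn.
  apply: norm_sum_mean0_le => [|//|b]; first exact: sum_G_nontriv.
  rewrite exprS; apply: ler_pM; rewrite ?exprn_ge0 ?(ltW d_gt0) ?d_le_qseq //.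
  by have := path_prob_ge (rcons w b) c; rewrite size_c.
rewrite -mulr_sumr mulrC ler_wpM2r // -raddf_sum /= sumrB lecR exchange_big /=.
under eq_bigr do rewrite -mulr_sumr sum_path_prob mulr1.
rewrite sum_qseq sum_allwords_const -[_ *+ (#|A| ^ N)]mulr_natr /rho natrX exprMn !exprS.
by rewrite le_eqVlt; apply/orP; left; apply/eqP; ring.
Qed.

Lemma cond_prod_bound n r w : (N <= size w)%N ->
  (N.+1 * n <= count nontriv (iota (size w) r))%N ->
  `|cond_prod r w| <= (rho ^+ n)%:C.
Proof.
elim: n r w => [|n IHn] r w Nw.
  rewrite expr0 rmorph1 => _; elim: r w Nw => [|r IH] w Nw; first by rewrite normr1.
  by apply: cond_prod_step_le => b; apply: IH; rewrite size_rcons leqW.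
elim: r w Nw => [|r IHr] w Nw count_nt; first by move: count_nt; rewrite leqn0 muln_eq0.
case nt_w: (nontriv (size w)); last first.
  apply: cond_prod_step_le => b; apply: IHr; first by rewrite size_rcons leqW.
  by move: count_nt; rewrite /= nt_w size_rcons.
have count_r := count_size nontriv (iota (size w) r.+1); rewrite size_iota in count_r.
have count_N := count_size nontriv (iota (size w) N.+1); rewrite size_iota in count_N.
have [k def_r] : exists k, r.+1 = (N.+1 + k)%N.
  by exists (r - N)%N; move: count_nt count_r; rewrite mulnS; lia.
rewrite def_r in count_nt *; rewrite exprS rmorphM /=.
apply: cond_prod_contract => // u size_u; apply: IHn; first by rewrite size_u; lia.
move: count_nt; rewrite size_u -addnS iotaD count_cat mulnS; lia.
Qed.

Variable P : seq A -> R.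
Hypothesis P_ge0 : forall u, 0 <= P u.
Hypothesis P_rcons : forall u b, (N <= size u)%N -> P (rcons u b) = P u * qseq (lastN u) b.
Hypothesis sum_P : \sum_(a <- allwords A N) P a = 1.

Lemma sum_P_prod_char r u : (N <= size u)%N ->
  \sum_(c <- allwords A r) (P (u ++ c))%:C * prod_char (size u) c =
  (P u)%:C * cond_prod r u.
Proof.
elim: r u => [|r IH] u Nu; first by rewrite big_allwords0 cats0 /= !mulr1.
rewrite big_allwordsS /= big_distrr /=; apply: eq_bigr => b _.
transitivity (G (size u) b * \sum_(c <- allwords A r)
    (P (rcons u b ++ c))%:C * prod_char (size (rcons u b)) c).
  by rewrite big_distrr size_rcons; apply: eq_bigr => c _ /=; rewrite cat_rcons; ring.
by rewrite IH ?size_rcons ?leqW // P_rcons // rmorphM /=; ring.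
Qed.

Lemma norm_sum_P_prod_char_le n r : (N.+1 * n <= count nontriv (iota N r))%N ->
  `|\sum_(w <- allwords A (N + r)) (P w)%:C * prod_char 0 w| <= (rho ^+ n)%:C.
Proof.
move=> count_nt; rewrite big_allwords_cat.
under eq_big_allwords => u size_u.
  rewrite (eq_bigr (fun v => prod_char 0 u * ((P (u ++ v))%:C * prod_char (size u) v)));
    last by move=> v _; rewrite prod_char_cat add0n; ring.
  rewrite -big_distrr /= sum_P_prod_char ?size_u //.
  over.
apply: le_trans (ler_norm_sum _ _ _) _.
apply: (@le_trans _ _ (\sum_(u <- allwords A N) (P u)%:C * (rho ^+ n)%:C)).
  rewrite big_seq_cond [X in _ <= X]big_seq_cond.
  apply: ler_sum => u /andP[/size_allwords size_u _].
  rewrite !normrM (ger0_norm (x := (P u)%:C)) ?ler0c // mulrCA ler_wpM2l ?ler0c //.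
  rewrite -[X in _ <= X]mul1r; apply: ler_pM; rewrite ?normr_ge0 //.
    exact: norm_prod_char_le1.
  by apply: cond_prod_bound; rewrite size_u.
by rewrite -mulr_suml -raddf_sum /= sum_P mul1r.
Qed.

End CondProd.

Lemma sum_eq_natr_mul (T : finType) (V : pzSemiRingType) (c : T) (F : T -> V) :
  \sum_(b : T) (c == b)%:R * F b = F c.
Proof.
rewrite (bigD1 c) //= eqxx mul1r big1 ?addr0 // => b b_neq_c.
by rewrite eq_sym (negbTE b_neq_c) mul0r.
Qed.

Section Cylinders.
Variable A : finZmodType.
Local Open Scope classical_set_scope.

Lemma cyl_nil m : cyl m [::] = [set: config A].
Proof. by apply/seteqP; split => x //= _ i; rewrite ltn0. Qed.

Lemma cyl_rcons m (u : seq A) b :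
  cyl m (rcons u b) = cyl m u `&` [set x | x (m + (size u)%:Z) = b].
Proof.
apply/seteqP; split => x /=.
- move=> xub; split; last by have := xub (size u); rewrite size_rcons nth_rcons ltnn eqxx; apply.
  by move=> i iu; have := xub i; rewrite size_rcons nth_rcons iu; apply; apply: ltnW.
- case=> xu xb i; rewrite size_rcons ltnS leq_eqVlt => /orP[/eqP->|iu].
    by rewrite nth_rcons ltnn eqxx.
  by rewrite nth_rcons iu; apply: xu.
Qed.

Lemma cyl_cons m b (w : seq A) : cyl m (b :: w) = [set x | x m = b] `&` cyl (m + 1) w.
Proof.
apply/seteqP; split => x /=.
- move=> xbw; split; first by have := xbw 0%N; rewrite addr0; apply.
  by move=> i iw; have := xbw i.+1; rewrite intS addrA; apply.
- by case=> xb xw [|i] iw; rewrite ?addr0 // intS addrA; apply: xw.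
Qed.

Lemma indic_cyl_rcons (R : pzRingType) m (u : seq A) b x : (\1_(cyl m (rcons u b)) x : R) =
  \1_(cyl m u) x * (x (m + (size u)%:Z) == b)%:R.
Proof.
rewrite !indicE cyl_rcons in_setI.
have [xb|xNb] := eqVneq (x (m + (size u)%:Z)) b.
  by rewrite (@mem_set _ [set y | y (m + (size u)%:Z) = b] x) // andbT mulr1.
by rewrite (@memNset _ [set y | y (m + (size u)%:Z) = b] x) ?andbF ?mulr0 // => /= xb;
  rewrite xb eqxx in xNb.
Qed.

Lemma indic_cyl_cons (R : pzRingType) m b (w : seq A) x : (\1_(cyl m (b :: w)) x : R) =
  (x m == b)%:R * \1_(cyl (m + 1) w) x.
Proof.
rewrite !indicE cyl_cons in_setI.
have [xb|xNb] := eqVneq (x m) b.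
  by rewrite (@mem_set _ [set y | y m = b] x) // mul1r.
by rewrite (@memNset _ [set y | y m = b] x) ?mul0r // => /= xb; rewrite xb eqxx in xNb.
Qed.

Fixpoint window (x : config A) (m : int) (k : nat) : seq A :=
  if k is k'.+1 then x m :: window x (m + 1) k' else [::].

Lemma sum_allwords_indic_cyl (R : comPzRingType) (H : seq A -> R) k m x :
  \sum_(w <- allwords A k) H w * \1_(cyl m w) x = H (window x m k).
Proof.
elim: k m H => [|k IH] m H; first by rewrite big_allwords0 cyl_nil indicT mulr1.
rewrite big_allwordsS /=.
under eq_bigr => b _ do (under eq_bigr => w _ do rewrite indic_cyl_cons mulrCA).
under eq_bigr => b _ do rewrite -mulr_sumr (IH _ (fun w => H (b :: w))).
exact: sum_eq_natr_mul.
Qed.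

End Cylinders.

Lemma Re_sum (R : rcfType) (I : Type) (s : seq I) (F : I -> R[i]) :
  complex.Re (\sum_(i <- s) F i) = \sum_(i <- s) complex.Re (F i).
Proof.
elim: s => [|a s IH]; first by rewrite !big_nil.
by rewrite !big_cons -IH; move: (F a) (\sum_(i <- s) F i) => [? ?] [? ?].
Qed.

Lemma Im_sum (R : rcfType) (I : Type) (s : seq I) (F : I -> R[i]) :
  complex.Im (\sum_(i <- s) F i) = \sum_(i <- s) complex.Im (F i).
Proof.
elim: s => [|a s IH]; first by rewrite !big_nil.
by rewrite !big_cons -IH; move: (F a) (\sum_(i <- s) F i) => [? ?] [? ?].
Qed.

Lemma Re_mulrC (R : rcfType) (p : R) (z : R[i]) : complex.Re (p%:C * z) = p * complex.Re z.
Proof. by case: z => a b /=; rewrite mul0r subr0. Qed.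

Lemma Im_mulrC (R : rcfType) (p : R) (z : R[i]) : complex.Im (p%:C * z) = p * complex.Im z.
Proof. by case: z => a b /=; rewrite mul0r addr0. Qed.

Section CylinderProbabilities.
Variables (A : finZmodType) (R : realType) (mu : probability (shiftspace A) R).
Local Open Scope classical_set_scope.

Lemma measurable_cyl m (w : seq A) : measurable (cyl m w : set (shiftspace A)).
Proof. by apply: sub_sigma_algebra; exists m, w. Qed.

Definition cylprob m (w : seq A) : R := fine (mu (cyl m w)).

Lemma cylprobE m w : mu (cyl m w) = (cylprob m w)%:E.
Proof. by rewrite /cylprob fineK // fin_num_measure //; apply: measurable_cyl. Qed.

Lemma cylprob_ge0 m w : 0 <= cylprob m w.
Proof. by rewrite /cylprob fine_ge0 // measure_ge0. Qed.

Lemma cylprob_nil m : cylprob m [::] = 1.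
Proof. by rewrite /cylprob cyl_nil probability_setT. Qed.

Lemma cylprob_markov N (q : N.-tuple A -> A -> R) : is_markov mu q ->
  forall m u (a : N.-tuple A) b,
  cylprob m (u ++ a ++ [:: b]) = cylprob m (u ++ a) * q a b.
Proof. by move=> markov m u a b; have := markov m u a b; rewrite !cylprobE -EFinM => -[]. Qed.

Lemma integral_sum_indic (I : Type) (s : seq I) (H : I -> R) (F : I -> set (shiftspace A)) :
  (forall i, measurable (F i)) ->
  (\int[mu]_x (\sum_(i <- s) H i * \1_(F i) x)%:E = \sum_(i <- s) (H i)%:E * mu (F i))%E.
Proof.
move=> mF; under eq_integral do rewrite -sumEFin.
have HF_E i : (fun x => (H i * \1_(F i) x)%:E) = (fun x => (H i)%:E * (\1_(F i) x)%:E)%E.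
  by apply/funext => x; rewrite EFinM.
rewrite integral_sum // => [|i]; last by rewrite HF_E integrableZl // integrable_indic.
apply: eq_bigr => i _.
by rewrite HF_E integralZl ?integrable_indic // integral_indic // setIT.
Qed.

Lemma cylprob_rcons_sum m u : cylprob m u = \sum_(b : A) cylprob m (rcons u b).
Proof.
have sum_indic x : \sum_(b : A) 1 * \1_(cyl m (rcons u b)) x = \1_(cyl m u) x :> R.
  under eq_bigr do rewrite mul1r indic_cyl_rcons mulrC.
  exact: sum_eq_natr_mul.
apply: EFin_inj; rewrite -cylprobE -sumEFin.
under eq_bigr do rewrite -cylprobE -[mu _]mul1e.
rewrite -integral_sum_indic => [|b]; last exact: measurable_cyl.
under eq_integral do rewrite sum_indic.
by rewrite integral_indic ?setIT //; apply: measurable_cyl.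
Qed.

Lemma integral_window (H : seq A -> R) m k :
  (\int[mu]_x (H (window x m k))%:E = (\sum_(w <- allwords A k) H w * cylprob m w)%:E)%E.
Proof.
under eq_integral do rewrite -sum_allwords_indic_cyl.
rewrite integral_sum_indic => [|w]; last exact: measurable_cyl.
by rewrite -sumEFin; apply: eq_bigr => w _; rewrite cylprobE EFinM.
Qed.

Lemma cintegral_window (H : seq A -> R[i]) (f : shiftspace A -> R[i]) m k :
  (forall x, f x = H (window x m k)) ->
  cintegral mu f = \sum_(w <- allwords A k) (cylprob m w)%:C * H w.
Proof.
move=> fE; rewrite /cintegral.
under eq_integral do rewrite fE.
under [in X in Complex _ X]eq_integral do rewrite fE.
rewrite (integral_window (fun w => complex.Re (H w))).
rewrite (integral_window (fun w => complex.Im (H w))) /=.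
apply/eqP; rewrite eq_complex /= Re_sum Im_sum.
by apply/andP; split; apply/eqP; apply: eq_bigr => w _; rewrite ?Re_mulrC ?Im_mulrC mulrC.
Qed.

End CylinderProbabilities.

Section ZCharacters.
Variables (A : finZmodType) (R : realType) (s : seq int) (chi : int -> A -> R[i]).

Lemma prod_char_window m x k j :
  prod_char (fun j : nat => chi (m + j%:Z)) j (window x (m + j%:Z) k) =
  \prod_(i <- iota j k) chi (m + i%:Z) (x (m + i%:Z)).
Proof.
elim: k j => [|k IH] j /=; first by rewrite big_nil.
by rewrite big_cons -IH; congr (_ * prod_char _ _ (window _ _ _)); lia.
Qed.

Lemma Zchar_eval_window m k x :
  (forall n, n \notin s -> trivial_char (chi n)) ->
  (forall z, z \in s -> m <= z < m + k%:Z) ->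
  Zchar_eval s chi x = prod_char (fun j : nat => chi (m + j%:Z)) 0 (window x m k).
Proof.
move=> chi_triv s_in_window; have := prod_char_window m x k 0; rewrite addr0 => ->.
pose W := [seq m + i%:Z | i <- iota 0 k].
rewrite -(big_map (fun i : nat => m + i%:Z) xpredT (fun z => chi z (x z))) -/W.
rewrite (bigID (mem s)) /= [X in _ * X]big1 ?mulr1 => [|z /chi_triv/forallP/(_ (x z))/eqP //].
rewrite -big_filter /Zchar_eval; apply: perm_big; apply: uniq_perm.
- exact: undup_uniq.
- rewrite filter_uniq // map_inj_uniq ?iota_uniq // => i j /addrI /eqP.
  by rewrite eqz_nat => /eqP.
- move=> z; rewrite mem_undup mem_filter; case s_z: (z \in s); rewrite ?andbF ?andbT //.
  have /andP[m_le_z z_lt] := s_in_window z s_z.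
  apply/esym/mapP; exists `|z - m|%N; last by lia.
  by rewrite mem_iota; lia.
Qed.

Lemma Zchar_rank_le_count m j k :
  (forall z, z \in s -> m + j%:Z <= z < m + (j + k)%:Z) ->
  (Zchar_rank s chi <= count (fun i : nat => ~~ trivial_char (chi (m + i%:Z))) (iota j k))%N.
Proof.
move=> s_in_window; rewrite /Zchar_rank -size_filter -(size_map (fun z => `|z - m|%N)).
apply: uniq_leq_size.
- rewrite map_inj_in_uniq ?filter_uniq ?undup_uniq // => z1 z2.
  rewrite !mem_filter !mem_undup => /andP[_ /s_in_window win1] /andP[_ /s_in_window win2].
  by move: win1 win2; lia.
- move=> i /mapP [z]; rewrite mem_filter mem_undup => /andP[nt_z /s_in_window win_z] ->.
  rewrite mem_filter mem_iota; apply/andP; split; last by move: win_z; lia.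
  by have -> : m + (`|z - m|%N)%:Z = z by move: win_z; lia.
Qed.

End ZCharacters.

Unset Implicit Arguments.

Theorem mainTheorem8 (R : realType) (A : finZmodType) (N : nat)
  (mu : probability (shiftspace A) R) (q : N.-tuple A -> A -> R) :
  (1 <= N)%N ->
  stationary mu ->
  (forall a : N.-tuple A, \sum_(b : A) q a b = 1) ->
  is_markov mu q ->
  (forall (a : N.-tuple A) (b : A), q a b != 0) ->
  harmonically_mixing mu.
Proof.
move=> _ _ sum_q markov q_neq0 eps eps_gt0.
have P_markov := cylprob_markov markov.
have q_gt0 := transition_gt0 (cylprob_ge0 mu 0) (cylprob_nil mu 0)
  (cylprob_rcons_sum mu 0) (P_markov 0) q_neq0.
have [d d_gt0 d_le_q] := fin_pos_lower_bound (fun p : N.-tuple A * A => q_gt0 p.1 p.2).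
have [n rho_n_lt] := exists_expr_lt (rho_ge0_lt1 d_gt0 (fun t b => d_le_q (t, b)) sum_q) eps_gt0.
exists (N.+1 * n)%N => s chi [chi_char chi_triv] rank_gt.
pose B := (\max_(z <- s) `|z|%N)%N; pose m := - (B + N)%:Z; pose r := (2 * B).+1.
have s_in_window z : z \in s -> m + N%:Z <= z < m + (N + r)%:Z.
  move=> s_z; have : (`|z|%N <= B)%N by apply: leq_bigmax_seq.
  rewrite /m /r; lia.
have supp_window z : z \in s -> m <= z < m + (N + r)%:Z by move/s_in_window; lia.
rewrite (cintegral_window mu (fun x => Zchar_eval_window x chi_triv supp_window)).
apply: le_lt_trans (norm_sum_P_prod_char_le d_gt0 (fun t b => d_le_q (t, b)) sum_q
  (G := fun j => chi (m + j%:Z)) _ (nontriv := fun j => ~~ trivial_char (chi (m + j%:Z))) _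
  (cylprob_ge0 mu m) (P_rcons (P_markov m)) _ (n := n) (r := r) _) _.
- by move=> j b; have [_ ->] := chi_char (m + j%:Z).
- by move=> j; have [chiD _] := chi_char (m + j%:Z); apply: sum_char_eq0.
- by have := sum_P_cat (cylprob_rcons_sum mu m) N [::]; rewrite cylprob_nil.
- exact: leq_trans (ltnW rank_gt) (Zchar_rank_le_count chi s_in_window).
by rewrite ltcR.
Qed.
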